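(* Let $B\ge1$, $G=\{0,\frac1B,\dots,1\}$, $t\in G$ and $\eta\in(0,t)$. For each $r<0$ there exists $f^*\in\mathcal F_{r,\eta}$ with $\mathcal T_t(f^* )=\sup_{f\in\mathcal F_{r,\eta}}\mathcal T_t(f)$.
   Context: Identify a probability mass function $f$ on $G$ with $(f_0,\dots,f_B)$, $f_i=f(i/B)$; let $\mathcal T_t(f)=\sum_{i\ge Bt}f_i$ and $\mathcal E(f)=\sum_{i=1}^B\frac iBf_i$. For $r<0$, $a,b\ge0$, $\lambda\in(0,1)$, let $M_r(a,b;\lambda)=\{(1-\lambda)a^r+\lambda b^r\}^{1/r}$ if $ab>0$ and $0$ if $ab=0$. A non-negative function $g$ on an interval is $r$-concave if $g((1-\lambda)x+\lambda y)\ge M_r(g(x),g(y);\lambda)$ for all $x,y$, $\lambda\in(0,1)$ (for $r<0$ this is equivalent to $g^r$ being convex, with $0^r=\infty$). A probability mass function $f$ on $G$ is $r$-concave if the linear interpolant to $\{(i,f_i):i=0,\dots,B\}$ is $r$-concave on $[0,B]$. $\mathcal F_r$ denotes the set of $r$-concave probability mass functions on $G$ and $\mathcal F_{r,\eta}=\{f\in\mathcal F_r:\mathcal E(f)\le\eta\}$. *)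

From Stdlib Require Import Reals Lra.
Open Scope R_scope.

(* A probability mass function on G = {0, 1/B, ..., 1} is represented by
   f : nat -> R with f i = f(i/B) for i = 0..B (values beyond B are irrelevant). *)
Definition is_pmf (B : nat) (f : nat -> R) : Prop :=
  (forall i, (i <= B)%nat -> 0 <= f i) /\ sum_f_R0 f B = 1.

Definition tail (B : nat) (t : R) (f : nat -> R) : R :=
  sum_f_R0 (fun i => if Rle_dec (INR B * t) (INR i) then f i else 0) B.

Definition expect (B : nat) (f : nat -> R) : R :=
  sum_f_R0 (fun i => INR i / INR B * f i) B.

Definition Mr (r a b lam : R) : R :=
  if Rlt_dec 0 (a * b) then
    Rpower ((1 - lam) * Rpower a r + lam * Rpower b r) (/ r)
  else 0.

Definition r_concave_on (r lo hi : R) (g : R -> R) : Prop :=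
  (forall x, lo <= x <= hi -> 0 <= g x) /\
  forall x y lam, lo <= x <= hi -> lo <= y <= hi -> 0 < lam < 1 ->
    g ((1 - lam) * x + lam * y) >= Mr r (g x) (g y) lam.

Definition interp (f : nat -> R) (x : R) : R :=
  let i := Z.to_nat (Int_part x) in
  f i + (x - INR i) * (f (S i) - f i).

Definition r_concave_pmf (B : nat) (r : R) (f : nat -> R) : Prop :=
  r_concave_on r 0 (INR B) (interp f).

Definition F_r_eta (B : nat) (r eta : R) (f : nat -> R) : Prop :=
  is_pmf B f /\ r_concave_pmf B r f /\ expect B f <= eta.

(* The feasible set F_{r,eta}, read as a subset of R^(B+1), is compact and nonempty,
   and T_t is continuous on it, so the supremum is attained.
   - Nonempty: the point mass at 0 has expectation 0, and its interpolant (1 - x)_+ is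
     concave where positive, which suffices for r-concavity because M_r <= M_1 for r < 0.
   - Bounded: the entries of a pmf lie in [0, 1].
   - Closed: every constraint is a non-strict inequality between continuous functions of
     the entries, except r-concavity, since M_r jumps where a product of values vanishes.
     At a limit point either one of the two values is 0, and then M_r = 0 is harmless,
     or both are positive, and M_r is continuous there. *)
From Pilot Require Import Defs.
From Stdlib Require Import Reals Lra Lia ZArith.
Open Scope R_scope.

Lemma Rpower_gt_0 (x y : R) : 0 < Rpower x y.
Proof. apply exp_pos. Qed.

Lemma Rpower_ge_tangent (u r : R) : 0 < u -> r <= 0 -> 1 + r * (u - 1) <= Rpower u r.
Proof.
intros Hu Hr; unfold Rpower.
assert (Hln := exp_ineq1_le (ln u)); rewrite exp_ln in Hln by exact Hu.
assert (Hexp := exp_ineq1_le (r * ln u)).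
nra.
Qed.

Lemma Rpower_le_base_nonpos (x y e : R) : 0 < x <= y -> e <= 0 -> Rpower y e <= Rpower x e.
Proof.
intros Hxy He.
replace e with (- - e) by ring; rewrite (Rpower_Ropp y), (Rpower_Ropp x).
apply Rinv_le_contravar; [apply Rpower_gt_0|].
apply Rle_Rpower_l; lra.
Qed.

Lemma Rpower_mean_le_arith_mean (a b lam r : R) :
  0 < a -> 0 < b -> 0 < lam < 1 -> r < 0 ->
  Rpower ((1 - lam) * Rpower a r + lam * Rpower b r) (/ r) <= (1 - lam) * a + lam * b.
Proof.
intros Ha Hb Hlam Hr.
set (m := (1 - lam) * a + lam * b).
assert (Hm : 0 < m) by (unfold m; nra).
assert (Htangent : forall u, 0 < u -> Rpower m r * (1 + r * (u / m - 1)) <= Rpower u r).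
{ intros u Hu.
  replace (Rpower u r) with (Rpower m r * Rpower (u / m) r).
  - apply Rmult_le_compat_l; [left; apply Rpower_gt_0|].
    apply Rpower_ge_tangent; [apply Rdiv_lt_0_compat|]; lra.
  - rewrite Rpower_mult_distr by (try apply Rdiv_lt_0_compat; lra).
    f_equal; field; lra. }
assert (Hmean : Rpower m r <= (1 - lam) * Rpower a r + lam * Rpower b r).
{ assert (Ha' := Rmult_le_compat_l (1 - lam) _ _ ltac:(lra) (Htangent a Ha)).
  assert (Hb' := Rmult_le_compat_l lam _ _ ltac:(lra) (Htangent b Hb)).
  assert (Hsum : (1 - lam) * (1 + r * (a / m - 1)) + lam * (1 + r * (b / m - 1)) = 1)
    by (unfold m in *; field; lra).
  replace (Rpower m r) with (Rpower m r * 1) at 1 by ring.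
  rewrite <- Hsum at 1. lra. }
assert (Hroot : Rpower (Rpower m r) (/ r) = m)
  by (rewrite Rpower_mult, Rinv_r, Rpower_1; lra).
rewrite <- Hroot.
apply Rpower_le_base_nonpos; [split; [apply Rpower_gt_0 | exact Hmean]|].
left; apply Rinv_lt_0_compat; lra.
Qed.

Lemma r_concave_on_of_concave_on_support (r lo hi : R) (g : R -> R) :
  r < 0 ->
  (forall x, lo <= x <= hi -> 0 <= g x) ->
  (forall x y lam, lo <= x <= hi -> lo <= y <= hi -> 0 < lam < 1 ->
     0 < g x -> 0 < g y -> (1 - lam) * g x + lam * g y <= g ((1 - lam) * x + lam * y)) ->
  r_concave_on r lo hi g.
Proof.
intros Hr Hnonneg Hconc; split; [exact Hnonneg|].
intros x y lam Hx Hy Hlam.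
assert (Hz : lo <= (1 - lam) * x + lam * y <= hi) by nra.
unfold Mr; destruct (Rlt_dec 0 (g x * g y)) as [Hpos|Hzero].
- assert (Hgx := Hnonneg x Hx); assert (Hgy := Hnonneg y Hy).
  assert (0 < g x /\ 0 < g y) as [Hgx' Hgy'] by (split; nra).
  apply Rle_ge; eapply Rle_trans.
  + apply Rpower_mean_le_arith_mean; assumption.
  + apply Hconc; assumption.
- apply Rle_ge, Hnonneg, Hz.
Qed.

Definition delta0 (i : nat) : R := if Nat.eqb i 0 then 1 else 0.

Lemma Int_part_nat_bounds (x : R) : 0 <= x ->
  INR (Z.to_nat (Int_part x)) <= x < INR (Z.to_nat (Int_part x)) + 1.
Proof.
intros Hx; destruct (base_Int_part x) as [Hle Hlt].
assert (Hnonneg : (0 <= Int_part x)%Z).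
{ assert (Hgt : IZR (-1) < IZR (Int_part x)) by (simpl; lra).
  apply lt_IZR in Hgt; lia. }
rewrite INR_IZR_INZ, Z2Nat.id by exact Hnonneg; lra.
Qed.

Lemma interp_delta0 (x : R) : 0 <= x -> interp delta0 x = Rmax 0 (1 - x).
Proof.
intros Hx; unfold interp; cbv zeta.
destruct (Int_part_nat_bounds x Hx) as [Hle Hlt].
destruct (Z.to_nat (Int_part x)) as [|i]; unfold delta0; cbn -[INR] in *.
- rewrite INR_0 in *; rewrite Rmax_right; lra.
- rewrite S_INR in *; pose proof (pos_INR i).
  rewrite Rmax_left; lra.
Qed.

Lemma delta0_feasible (B : nat) (r eta : R) : 0 < eta -> r < 0 -> F_r_eta B r eta delta0.
Proof.
intros Heta Hr; split; [split|split].
- intros i _; unfold delta0; destruct (Nat.eqb i 0); lra.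
- induction B as [|B IH]; simpl; [reflexivity|]; rewrite IH; unfold delta0; simpl; lra.
- apply r_concave_on_of_concave_on_support; [exact Hr| |].
  + intros x Hx; rewrite interp_delta0 by lra; apply Rmax_l.
  + intros x y lam Hx Hy Hlam; rewrite !interp_delta0 by nra.
    unfold Rmax; repeat destruct Rle_dec; nra.
- unfold expect; rewrite (sum_eq _ (fun _ => 0)), sum_cte; [lra|].
  intros [|i] _; unfold delta0; simpl; [unfold Rdiv|]; lra.
Qed.

Lemma sum_f_R0_ge_term (f : nat -> R) (n i : nat) :
  (forall j, (j <= n)%nat -> 0 <= f j) -> (i <= n)%nat -> f i <= sum_f_R0 f n.
Proof.
induction n as [|n IH] in i |- *; intros Hf Hi; simpl.
- replace i with 0%nat by lia; lra.
- assert (Hlast := Hf (S n) (le_n _)).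
  destruct (Nat.eq_dec i (S n)) as [->|Hne].
  + assert (Hf0 := Hf 0%nat (Nat.le_0_l _)).
    assert (f 0%nat <= sum_f_R0 f n) by (apply IH; [intros; apply Hf|]; lia).
    lra.
  + assert (f i <= sum_f_R0 f n) by (apply IH; [intros; apply Hf|]; lia).
    lra.
Qed.

Section Agreement.
Variables (B : nat) (f g : nat -> R).
Hypothesis Hfg : forall i, (i <= B)%nat -> f i = g i.

Lemma interp_agree (x : R) : 0 <= x <= INR B -> interp f x = interp g x.
Proof.
intros Hx; unfold interp; cbv zeta.
destruct (Int_part_nat_bounds x (proj1 Hx)) as [Hle Hlt].
set (i := Z.to_nat (Int_part x)) in *.
destruct (lt_dec i B) as [HiB|HiB].
- rewrite !Hfg by lia; reflexivity.
- (* at [x = B] the interpolant reads [f (B + 1)], but with weight [x - B = 0] *)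
  assert (HBi : INR B <= INR i) by (apply le_INR; lia).
  replace (x - INR i) with 0 by lra.
  rewrite !Rmult_0_l, !Rplus_0_r; apply Hfg.
  apply INR_le; lra.
Qed.

Lemma F_r_eta_agree (r eta : R) : F_r_eta B r eta f -> F_r_eta B r eta g.
Proof.
intros [[Hnonneg Hsum] [[Hinterp_nonneg Hconc] Hexp]].
split; [split|split; [split|]].
- intros i Hi; rewrite <- Hfg by exact Hi; auto.
- rewrite <- Hsum; apply sum_eq; intros i Hi; symmetry; auto.
- intros x Hx; rewrite <- interp_agree by exact Hx; auto.
- intros x y lam Hx Hy Hlam.
  rewrite <- !interp_agree by (assumption || nra); auto.
- unfold expect in *; rewrite <- Hexp; apply Req_le, sum_eq.
  intros i Hi; rewrite Hfg by exact Hi; reflexivity.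
Qed.

Lemma tail_agree (t : R) : tail B t f = tail B t g.
Proof. apply sum_eq; intros i Hi; destruct Rle_dec; auto. Qed.

End Agreement.

Lemma Rpower_continuity_pt (x e : R) : 0 < x -> continuity_pt (fun y => Rpower y e) x.
Proof.
intros Hx; apply derivable_continuous_pt.
exists (e * Rpower x (e - 1)); apply derivable_pt_lim_power, Hx.
Qed.

From mathcomp Require all_boot all_algebra.
From mathcomp Require classical_sets reals topology normedtype derive.
From mathcomp Require Rstruct Rstruct_topology.

Module Compactness.
Import all_boot all_algebra.
Import classical_sets reals topology normedtype derive.
Import Rstruct Rstruct_topology.

Section Closure.
Context {T : topologicalType}.

(* Stated with the Stdlib operations, so that [apply:] matches the functions of Defs
   without unfolding the neighbourhood filter of [T]. *)

Lemma Rplus_continuous_at (f g : T -> R) (v : T) :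
  {for v, continuous f} -> {for v, continuous g} -> {for v, continuous (fun w => f w + g w)}.
Proof. exact: (@cvgD _ R^o). Qed.

Lemma Rminus_continuous_at (f g : T -> R) (v : T) :
  {for v, continuous f} -> {for v, continuous g} -> {for v, continuous (fun w => f w - g w)}.
Proof. exact: (@cvgB _ R^o). Qed.

Lemma Rmult_continuous_at (f g : T -> R) (v : T) :
  {for v, continuous f} -> {for v, continuous g} -> {for v, continuous (fun w => f w * g w)}.
Proof. exact: cvgM. Qed.

Lemma closure_ge_continuous (A : set T) (h : T -> R) (v : T) (c : R) :
  closure A v -> {for v, continuous h} -> (forall w, A w -> c <= h w) -> c <= h v.
Proof.
move=> Av hc Ah; apply: Rnot_lt_le => /RltP hvc.
have [w [Aw /RltP hwc]] := Av _ (cvgr_lt _ hc _ hvc).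
by have := Ah w Aw; lra.
Qed.

Lemma closure_le_continuous (A : set T) (h : T -> R) (v : T) (c : R) :
  closure A v -> {for v, continuous h} -> (forall w, A w -> h w <= c) -> h v <= c.
Proof.
move=> Av hc Ah; apply: Rnot_lt_le => /RltP hcv.
have [w [Aw /RltP hcw]] := Av _ (cvgr_gt _ hc _ hcv).
by have := Ah w Aw; lra.
Qed.

Lemma Rpower_continuous_at (h : T -> R) (e : R) (v : T) :
  {for v, continuous h} -> 0 < h v -> {for v, continuous (fun w => Rpower (h w) e)}.
Proof.
move=> hc hv; apply: (continuous_comp (g := fun y => Rpower y e) hc).
exact/continuity_pt_cvg/Rpower_continuity_pt.
Qed.

Lemma Mr_continuous_at (r lam : R) (a b : T -> R) (v : T) :
  0 < lam < 1 -> {for v, continuous a} -> {for v, continuous b} -> 0 < a v -> 0 < b v ->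
  {for v, continuous (fun w => Mr r (a w) (b w) lam)}.
Proof.
move=> Hlam ac bc av bv.
pose mean w := (1 - lam) * Rpower (a w) r + lam * Rpower (b w) r.
have meanc : {for v, continuous mean}.
  by apply: Rplus_continuous_at; apply: Rmult_continuous_at;
    (exact: cst_continuous || exact: Rpower_continuous_at).
have meanv : 0 < mean v.
  rewrite /mean; have := Rpower_gt_0 (a v) r; have := Rpower_gt_0 (b v) r.
  nra.
have abv : (0 < a v * b v)%R by apply/RltP; apply: Rmult_lt_0_compat.
have Heq : \forall w \near v, Rpower (mean w) (/ r) = Mr r (a w) (b w) lam.
  apply: filterS (cvgr_gt _ (cvgM ac bc) _ abv) => w /RltP abw.
  by rewrite /Mr; case: Rlt_dec.
have Mrv : Mr r (a v) (b v) lam = Rpower (mean v) (/ r).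
  by rewrite /Mr; case: Rlt_dec => // /RltP; rewrite abv.
rewrite /prop_for /continuous_at Mrv.
exact: cvg_trans (near_eq_cvg Heq) (Rpower_continuous_at mean (/ r) v meanc meanv).
Qed.

Lemma closure_Mr_le (A : set T) (r lam : R) (a b c : T -> R) (v : T) :
  0 < lam < 1 -> closure A v ->
  {for v, continuous a} -> {for v, continuous b} -> {for v, continuous c} ->
  0 <= a v -> 0 <= b v -> 0 <= c v ->
  (forall w, A w -> Mr r (a w) (b w) lam <= c w) -> Mr r (a v) (b v) lam <= c v.
Proof.
move=> Hlam Av ac bc cc av bv cv Ale.
have [abv|abv] := Rlt_dec 0 (a v * b v); last by rewrite /Mr; case: Rlt_dec.
have Mrc := Mr_continuous_at r lam a b v Hlam ac bc ltac:(nra) ltac:(nra).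
suff : 0 <= c v - Mr r (a v) (b v) lam by lra.
apply: (closure_ge_continuous A (fun w => c w - Mr r (a w) (b w) lam)) => //.
  exact: Rminus_continuous_at.
by move=> w /Ale; lra.
Qed.
End Closure.

Section Rows.
Variable B : nat.
Local Notation V := 'rV[R]_B.+1.

Definition pmf_of_row (v : V) (i : nat) : R :=
  if (i <= B)%N then v ord0 (inord i) else 0.

Lemma pmf_of_row_onto (f : nat -> R) :
  exists v : V, forall i, (i <= B)%coq_nat -> pmf_of_row v i = f i.
Proof.
exists (\row_(j < B.+1) f j)%R => i /ssrnat.leP iB.
by rewrite /pmf_of_row iB mxE inordK.
Qed.

Lemma pmf_of_row_ord (v : V) (i : 'I_B.+1) : pmf_of_row v i = v ord0 i.
Proof. by rewrite /pmf_of_row -ltnS ltn_ord inord_val. Qed.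

Lemma pmf_of_row_continuous (i : nat) (v : V) : {for v, continuous (fun w : V => pmf_of_row w i)}.
Proof.
rewrite /pmf_of_row; case: (i <= B)%N; last exact: cst_continuous.
exact: coord_continuous.
Qed.

Lemma interp_pmf_of_row_continuous (x : R) (v : V) :
  {for v, continuous (fun w : V => interp (pmf_of_row w) x)}.
Proof.
apply: Rplus_continuous_at; first exact: pmf_of_row_continuous.
apply: Rmult_continuous_at; first exact: cst_continuous.
by apply: Rminus_continuous_at; exact: pmf_of_row_continuous.
Qed.

Lemma sum_f_R0_continuous (h : nat -> V -> R) (n : nat) (v : V) :
  (forall i, {for v, continuous (h i)}) ->
  {for v, continuous (fun w => sum_f_R0 (fun i => h i w) n)}.
Proof.
move=> hc; elim: n => [|n IH] /=; first exact: hc.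
exact: Rplus_continuous_at.
Qed.

Lemma tail_pmf_of_row_continuous (t : R) (v : V) :
  {for v, continuous (fun w : V => tail B t (pmf_of_row w))}.
Proof.
apply: sum_f_R0_continuous => i; case: Rle_dec => _; last exact: cst_continuous.
exact: pmf_of_row_continuous.
Qed.

Lemma expect_pmf_of_row_continuous (v : V) :
  {for v, continuous (fun w : V => expect B (pmf_of_row w))}.
Proof.
apply: sum_f_R0_continuous => i.
apply: Rmult_continuous_at; [exact: cst_continuous | exact: pmf_of_row_continuous].
Qed.

Definition feasible_rows (r eta : R) : set V := [set v | F_r_eta B r eta (pmf_of_row v)].

Lemma feasible_rows_closed (r eta : R) : closed (feasible_rows r eta).
Proof.
move=> v Fv.
have Hnonneg i : (i <= B)%coq_nat -> 0 <= pmf_of_row v i.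
  move=> iB; apply: (closure_ge_continuous _ _ _ _ Fv (pmf_of_row_continuous i v)).
  by move=> w [[Hw _] _]; exact: Hw.
have Hsum : sum_f_R0 (pmf_of_row v) B = 1.
  apply: Rle_antisym.
  - apply: (closure_le_continuous _ _ _ _ Fv (sum_f_R0_continuous _ _ _ (fun i => pmf_of_row_continuous i v))).
    by move=> w [[_ ->] _]; lra.
  - apply: (closure_ge_continuous _ _ _ _ Fv (sum_f_R0_continuous _ _ _ (fun i => pmf_of_row_continuous i v))).
    by move=> w [[_ ->] _]; lra.
have Hinterp x : 0 <= x <= INR B -> 0 <= interp (pmf_of_row v) x.
  move=> Hx; apply: (closure_ge_continuous _ _ _ _ Fv (interp_pmf_of_row_continuous x v)).
  by move=> w [_ [[Hw _] _]]; exact: Hw.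
have Hexpect : expect B (pmf_of_row v) <= eta.
  apply: (closure_le_continuous _ _ _ _ Fv (expect_pmf_of_row_continuous v)).
  by move=> w [_ [_ Hw]].
split; [by [] | split; [split; [exact: Hinterp|] | exact: Hexpect]].
move=> x y lam Hx Hy Hlam; apply: Rle_ge.
have Hz : 0 <= (1 - lam) * x + lam * y <= INR B by nra.
apply: (closure_Mr_le _ r lam (fun w => interp (pmf_of_row w) x)
  (fun w => interp (pmf_of_row w) y) (fun w => interp (pmf_of_row w) ((1 - lam) * x + lam * y))
  v Hlam Fv); try exact: interp_pmf_of_row_continuous.
- exact: Hinterp.
- exact: Hinterp.
- exact: Hinterp.
- by move=> w [_ [[_ Hw] _]]; apply: Rge_le; exact: Hw.
Qed.

Lemma feasible_rows_compact (r eta : R) : compact (feasible_rows r eta).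
Proof.
apply: (subclosed_compact (feasible_rows_closed r eta)
  (rV_compact (fun=> @segment_compact R 0%R 1%R))).
move=> w [[Hnonneg Hsum] _] i /=.
have iB : (i <= B)%coq_nat by apply/ssrnat.leP; rewrite -ltnS ltn_ord.
have := sum_f_R0_ge_term _ _ _ Hnonneg iB; have := Hnonneg _ iB.
rewrite Hsum !pmf_of_row_ord => H0 H1.
by rewrite in_itv /=; apply/andP; split; apply/RleP.
Qed.

Lemma tail_maximizer_exists (r eta t : R) : 0 < eta -> r < 0 ->
  exists fstar : nat -> R, F_r_eta B r eta fstar /\
    forall f : nat -> R, F_r_eta B r eta f -> tail B t f <= tail B t fstar.
Proof.
move=> Heta Hr.
have [v0 Hv0] := pmf_of_row_onto delta0.
have F0 : (feasible_rows r eta !=set0)%classic.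
  by exists v0; apply: (F_r_eta_agree B delta0) (delta0_feasible B r eta Heta Hr) => i /Hv0.
have [c /[!inE] Fc cmax] := compact_EVT_max F0 (feasible_rows_compact r eta)
  (continuous_subspaceT (tail_pmf_of_row_continuous t)).
exists (pmf_of_row c); split => // f Ff.
have [w Hw] := pmf_of_row_onto f.
rewrite (tail_agree B f (pmf_of_row w)) => [|i /Hw //].
apply/RleP/cmax; rewrite inE.
by apply: (F_r_eta_agree B f) Ff => i /Hw.
Qed.

End Rows.
End Compactness.

Theorem lemma3 (B k : nat) (r eta : R) :
  (1 <= B)%nat -> (k <= B)%nat ->
  0 < eta < INR k / INR B ->
  r < 0 ->
  exists fstar : nat -> R,
    F_r_eta B r eta fstar /\
    (forall f : nat -> R, F_r_eta B r eta f ->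
       tail B (INR k / INR B) f <= tail B (INR k / INR B) fstar).
Proof.
intros _ _ [Heta _] Hr.
exact (Compactness.tail_maximizer_exists B r eta (INR k / INR B) Heta Hr).
Qed.
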